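(* Consider a ReLU network with $L$ hidden layers, an input point $x \in \mathbb{R}^n$, and a convex distance function $\delta$ to $x$. Let $\mathcal{G}$ be the hierarchical search graph and let $A^x := (A^x_1)$ be the $1$-layer partial activation pattern of $x$. Then for every $l \in [L]$ and every $l$-layer partial activation pattern $A$ with $R_A \neq \emptyset$, there is a path in $\mathcal{G}$ from $A^x$ to $A$ along which the values $\operatorname{dist}(R_B)$ of the visited patterns $B$ are monotonically nondecreasing.
   Context: The ReLU network with input dimension $n$ and $n_i$ neurons in hidden layer $i$ is given by $x^0 := x$, $z^{i+1} := W^i x^i + b^i$ for $i \in \{0,\dots,L-1\}$, $x^i := \max(0, z^i)$ (entrywise) for $i \in [L]$, and output $f(x) := W^L x^L + b^L$, where $W^i, b^i$ are real weight matrices and bias vectors of compatible dimensions; $z^i_j(v)$ denotes the $j$-th preactivation of layer $i$ at input $v$. For $l \in [L]$, an $l$-layer partial activation pattern is a tuple $A = (A_1,\dots,A_l)$ of functions $A_i : [n_i] \to \{-1,+1\}$; its region is $R_A := \{ v \in \mathbb{R}^n : A_i(j)\, z^i_j(v) \ge 0 \text{ for all } i \in [l], j \in [n_i]\}$ (a closed polyhedron). The activation pattern of an input $v$ has $A^v_i(j) = +1$ if $z^i_j(v) \ge 0$ and $-1$ otherwise; the $1$-layer pattern of $x$ is $(A^x_1)$. For $l \ge 2$, $\operatorname{parent}(A_1,\dots,A_l) := (A_1,\dots,A_{l-1})$, and $A$ is a child of $\operatorname{parent}(A)$. Two $l$-layer patterns are siblings if they have the same parent (for $l=1$, all $1$-layer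 patterns are siblings), and neighboring siblings if they differ on exactly one neuron of layer $l$. A convex distance function to $x$ is a convex, continuous function $\delta : \mathbb{R}^n \to [0,\infty)$ with bounded sublevel sets and $\delta(x)=0$ (e.g. $\delta(v) = \|v - x\|_p$); for a nonempty closed set $S$, $\operatorname{dist}(S) := \min_{v \in S}\delta(v)$. The hierarchical search graph $\mathcal{G}$ has as vertices all $l$-layer partial activation patterns with nonempty region, for $l \in [L]$; it has an edge between two $l$-layer patterns whenever they are neighboring siblings, and an edge between an $(l-1)$-layer pattern $B$ and a child $A$ of $B$ (with $R_A \neq \emptyset$) whenever $R_A$ has the smallest value of $\operatorname{dist}$ among all children of $B$ with nonempty region (equivalently $\operatorname{dist}(R_A) = \operatorname{dist}(R_B)$). *)

From HB Require Import structures.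
From mathcomp Require Import all_boot all_order all_algebra.
From mathcomp Require Import all_classical all_reals all_analysis.
Set Implicit Arguments. Unset Strict Implicit. Unset Printing Implicit Defensive.
Import Order.TTheory GRing.Theory Num.Theory.
Import numFieldNormedType.Exports.
Local Open Scope classical_set_scope.
Local Open Scope ring_scope.

(** Conventions.
    - Widths are given by [d : nat -> nat]: [d 0] is the input dimension n,
      and [d i] (i >= 1) is the number n_i of neurons of hidden layer i.
    - [W i : 'M_(d i.+1, d i)] and [b i : 'cV_(d i.+1)] are W^i and b^i.
      (Only i < L are used by the statement; the output layer plays no role.)
    - Hidden layer i (1-based in the paper) is indexed here by k = i-1 (0-based).
    - A sign +1 is encoded by [true], -1 by [false]. *)

Section Network.
Variables (R : realType) (d : nat -> nat).
Variables (W : forall i, 'M[R]_(d i.+1, d i)) (b : forall i, 'cV[R]_(d i.+1)).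

Definition relu (t : R) : R := Num.max 0 t.

Fixpoint postact (v : 'cV[R]_(d 0%N)) (k : nat) : 'cV[R]_(d k) :=
  match k return 'cV[R]_(d k) with
  | 0%N => v
  | k'.+1 => map_mx relu (W k' *m postact v k' + b k')
  end.

(** preact v k = z^{k+1}(v) *)
Definition preact (v : 'cV[R]_(d 0%N)) (k : nat) : 'cV[R]_(d k.+1) :=
  W k *m postact v k + b k.

(** An l-layer partial activation pattern: for each layer k < l (paper layer
    k+1) a sign for each of its d k.+1 neurons. *)
Definition pattern (l : nat) := forall k : 'I_l, 'I_(d k.+1) -> bool.

Definition sgnb (s : bool) : R := if s then 1 else -1.

Definition region (l : nat) (A : pattern l) : set 'cV[R]_(d 0%N) :=
  [set v | forall (k : 'I_l) (j : 'I_(d k.+1)),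
           0 <= sgnb (A k j) * preact v k j ord0].

Definition first_pattern (v : 'cV[R]_(d 0%N)) : pattern 1 :=
  fun k j => 0 <= preact v k j ord0.
Arguments first_pattern v _ _.

Definition parent (l : nat) (A : pattern l.+1) : pattern l :=
  fun k j => A (widen_ord (leqnSn l) k) j.
Arguments parent {l} A _ _.

Definition is_parent (l : nat) (B : pattern l) (A : pattern l.+1) : Prop :=
  forall k j, parent A k j = B k j.

Definition neighboring_siblings (l : nat) (A B : pattern l.+1) : Prop :=
  (forall k j, parent A k j = parent B k j) /\
  #|[set j : 'I_(d l.+1) | A ord_max j != B ord_max j]| = 1%N.

Definition convex_distance_function (x : 'cV[R]_(d 0%N))
    (delta : 'cV[R]_(d 0%N) -> R) : Prop :=
  [/\ forall u v (t : R), 0 <= t <= 1 ->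
        delta (t *: u + (1 - t) *: v) <= t * delta u + (1 - t) * delta v,
      continuous delta,
      forall c : R, bounded_set [set v | delta v <= c],
      forall v, 0 <= delta v
    & delta x = 0].

(** dist(S) = min_{v in S} delta v; for the nonempty closed sets considered
    this minimum is attained, so it coincides with the infimum. *)
Definition dist (delta : 'cV[R]_(d 0%N) -> R) (S : set 'cV[R]_(d 0%N)) : R :=
  inf (delta @` S).

Definition vertex := {l : nat & pattern l}.

Definition vregion (B : vertex) := region (projT2 B).

Definition is_vertex (L : nat) (B : vertex) : Prop :=
  (0 < projT1 B <= L)%N /\ vregion B !=set0.

(** Edge relation (before requiring both endpoints to be vertices). *)
Inductive gedge (delta : 'cV[R]_(d 0%N) -> R) : vertex -> vertex -> Prop :=
  | gedge_sib (l : nat) (A B : pattern l.+1) :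
      neighboring_siblings A B ->
      gedge delta (existT _ l.+1 A) (existT _ l.+1 B)
  | gedge_down (l : nat) (B : pattern l) (A : pattern l.+1) :
      is_parent B A ->
      (forall A' : pattern l.+1, is_parent B A' -> region A' !=set0 ->
         dist delta (region A) <= dist delta (region A')) ->
      gedge delta (existT _ l B) (existT _ l.+1 A)
  | gedge_up (l : nat) (B : pattern l) (A : pattern l.+1) :
      is_parent B A ->
      (forall A' : pattern l.+1, is_parent B A' -> region A' !=set0 ->
         dist delta (region A) <= dist delta (region A')) ->
      gedge delta (existT _ l.+1 A) (existT _ l B).

Definition G_edge (L : nat) (delta : 'cV[R]_(d 0%N) -> R) (u v : vertex) : Prop :=
  [/\ is_vertex L u, is_vertex L v & gedge delta u v].

Fixpoint G_path (L : nat) (delta : 'cV[R]_(d 0%N) -> R) (p : seq vertex) : Prop :=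
  match p with
  | u :: ((v :: _) as p') => G_edge L delta u v /\ G_path L delta p'
  | _ => True
  end.

Fixpoint dist_monotone (delta : 'cV[R]_(d 0%N) -> R) (p : seq vertex) : Prop :=
  match p with
  | u :: ((v :: _) as p') =>
      dist delta (vregion u) <= dist delta (vregion v) /\ dist_monotone delta p'
  | _ => True
  end.

End Network.

(** Fix a pattern B of depth l.  On R_B the signs of the first l hidden layers
    are fixed, so the network up to layer l+1 is affine on R_B, R_B is convex,
    and the children of B are the cells cut out of R_B by the hyperplanes of
    layer l+1.  Crossing lemma: walking on the segment from a point of a child A
    to a point of a child C, the last hyperplane of a neuron on which A and C
    differ is crossed at a point of the sibling [flip A j] obtained by flipping
    that neuron, and by convexity of delta this point is not farther than the
    two endpoints.  Hence, when dist(R_C) <= dist(R_A), some neighbouring sibling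
    of A is closer to C in Hamming distance and has dist at most dist(R_A)
    (dist being an infimum, this needs an epsilon argument and a finite choice
    of the neuron).  Taking C of least dist among the children of B and
    inducting on the Hamming distance gives dist-monotone sibling paths from C
    to every nonempty child; C is joined to B by a down edge.  Induction on the
    depth, starting from the first-layer pattern of x whose dist is 0, proves
    the theorem. *)

From HB Require Import structures.
From mathcomp Require Import all_boot all_order all_algebra.
From mathcomp Require Import all_classical all_reals all_analysis.
From mathcomp Require Import ring lra.
Set Implicit Arguments. Unset Strict Implicit. Unset Printing Implicit Defensive.
Import Order.TTheory GRing.Theory Num.Theory.
Local Open Scope classical_set_scope.
Local Open Scope ring_scope.

Section Dist.
Variables (R : realType) (d : nat -> nat) (delta : 'cV[R]_(d 0%N) -> R).
Hypothesis delta_ge0 : forall v, 0 <= delta v.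
Implicit Types (S : set 'cV[R]_(d 0%N)) (v : 'cV[R]_(d 0%N)).

Lemma dist_lbound S : has_lbound (delta @` S).
Proof. by exists 0 => _ [v _ <-]. Qed.

Lemma dist_le {S v} : S v -> dist delta S <= delta v.
Proof. by move=> Sv; apply: (ge_inf (dist_lbound S)); exists v. Qed.

Lemma dist_ge0 S : S !=set0 -> 0 <= dist delta S.
Proof.
by move=> [v Sv]; apply: lb_le_inf => [|_ [w _ <-]]; [exists (delta v), v|].
Qed.

Lemma dist_sub S1 S2 : S1 `<=` S2 -> S1 !=set0 -> dist delta S2 <= dist delta S1.
Proof.
move=> sub12 [v S1v]; apply: lb_le_inf => [|_ [w S1w <-]].
  by exists (delta v), v.
exact/dist_le/sub12.
Qed.

Lemma dist_approx S e : S !=set0 -> 0 < e ->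
  exists2 v, S v & delta v <= dist delta S + e.
Proof.
move=> [v Sv] e0.
have [||_ [w Sw <-] lt] := @inf_lt _ (delta @` S) (dist delta S + e).
- by exists (delta v), v.
- by rewrite /dist ltrDl.
- by exists w => //; exact: ltW.
Qed.

Lemma dist_le_approx S m :
  (forall e, 0 < e -> exists2 v, S v & delta v <= m + e) ->
  S !=set0 /\ dist delta S <= m.
Proof.
move=> approx; split; first by have [v Sv _] := approx 1 ltr01; exists v.
apply/ler_addgt0Pr => e e0; have [v Sv le_v] := approx e e0.
exact: le_trans (dist_le Sv) le_v.
Qed.

End Dist.

Lemma convex_comb_ge0 (R : realType) (t p q : R) :
  0 <= t <= 1 -> 0 <= p -> 0 <= q -> 0 <= t * p + (1 - t) * q.
Proof. by move=> /andP[t0 t1] p0 q0; apply: addr_ge0; apply: mulr_ge0; lra. Qed.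

Definition cosign (R : realType) (p q : R) := (0 <= p /\ 0 <= q) \/ (p <= 0 /\ q <= 0).

Lemma relu_segment (R : realType) (p q t : R) : 0 <= t <= 1 -> cosign p q ->
  relu (t * p + (1 - t) * q) = t * relu p + (1 - t) * relu q.
Proof.
move=> /andP[t0 t1] [[p0 q0]|[p0 q0]]; rewrite /relu.
  by rewrite !max_r // convex_comb_ge0 ?t0.
by rewrite !max_l ?mulr0 ?addr0 //; nra.
Qed.

Lemma sgnb_cosign (R : realType) s (p q : R) :
  0 <= sgnb R s * p -> 0 <= sgnb R s * q -> cosign p q.
Proof. by case: s; rewrite /sgnb ?mul1r ?mulN1r => hp hq; [left | right]; lra. Qed.

Lemma sgnb_segment (R : realType) s (t p q : R) :
  sgnb R s * (t * p + (1 - t) * q) = t * (sgnb R s * p) + (1 - t) * (sgnb R s * q).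
Proof. by ring. Qed.

Lemma sgnbN (R : realType) s : sgnb R (~~ s) = - sgnb R s.
Proof. by case: s; rewrite /sgnb /= ?opprK. Qed.

Lemma affine_segment (R : realType) m n (M : 'M[R]_(m, n)) (c : 'cV[R]_m) X Y t :
  M *m (t *: X + (1 - t) *: Y) + c = t *: (M *m X + c) + (1 - t) *: (M *m Y + c).
Proof.
rewrite mulmxDr -!scalemxAr !scalerDr addrACA -scalerDl.
by rewrite [t + _]addrC subrK scale1r.
Qed.

Lemma entry_segment (R : realType) m n (P Q : 'M[R]_(m, n)) t i j :
  (t *: P + (1 - t) *: Q) i j = t * P i j + (1 - t) * Q i j.
Proof. by rewrite !mxE. Qed.

Lemma ord_max_ge l (k : 'I_l.+1) : (l <= k)%N -> k = ord_max.
Proof. by move=> ge_kl; apply/val_inj/eqP; rewrite eqn_leq ge_kl -ltnS ltn_ord. Qed.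

Section Segments.
Variables (R : realType) (d : nat -> nat).
Variables (W : forall i, 'M[R]_(d i.+1, d i)) (b : forall i, 'cV[R]_(d i.+1)).
Implicit Types (v c : 'cV[R]_(d 0%N)) (t : R).

(** On the region of an l-layer pattern the first l hidden layers keep their
    signs, so the network up to layer l+1 is affine along segments of it. *)
Lemma postact_segment l (B : pattern d l) v c t :
  region W b B v -> region W b B c -> 0 <= t <= 1 ->
  forall k, (k <= l)%N -> postact W b (t *: v + (1 - t) *: c) k
                          = t *: postact W b v k + (1 - t) *: postact W b c k.
Proof.
move=> Bv Bc t01; elim=> [//|k IH] lt_kl /=.
rewrite IH ?(ltnW lt_kl) // affine_segment; apply/matrixP => i j; rewrite !mxE (ord1 j).
have := sgnb_cosign (Bv (Ordinal lt_kl) i) (Bc (Ordinal lt_kl) i).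
by rewrite /preact !mxE => /(relu_segment t01).
Qed.

Lemma preact_segment l (B : pattern d l) v c t :
  region W b B v -> region W b B c -> 0 <= t <= 1 ->
  forall k, (k <= l)%N -> preact W b (t *: v + (1 - t) *: c) k
                          = t *: preact W b v k + (1 - t) *: preact W b c k.
Proof. by move=> Bv Bc t01 k le_kl; rewrite /preact (postact_segment Bv) // affine_segment. Qed.

Lemma region_convex l (B : pattern d l) v c t :
  region W b B v -> region W b B c -> 0 <= t <= 1 ->
  region W b B (t *: v + (1 - t) *: c).
Proof.
move=> Bv Bc t01 k j.
rewrite (preact_segment Bv Bc t01 (ltnW (ltn_ord k))) entry_segment sgnb_segment.
exact: convex_comb_ge0 t01 (Bv k j) (Bc k j).
Qed.

Lemma region_child l (B : pattern d l) (A : pattern d l.+1) v : is_parent B A ->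
  region W b A v <->
  region W b B v /\ forall j, 0 <= sgnb R (A ord_max j) * preact W b v l j ord0.
Proof.
move=> BA; split=> [Av|[Bv Av] k].
  by split=> [k j|j]; [rewrite -BA; exact: Av | exact: (Av ord_max j)].
have [lt_kl|ge_kl] := ltnP k l.
  have -> : k = widen_ord (leqnSn l) (Ordinal lt_kl) by exact: val_inj.
  by move=> j; have := Bv (Ordinal lt_kl) j; rewrite -BA.
by rewrite (ord_max_ge ge_kl).
Qed.

Lemma sibling_eq l (B : pattern d l) (A C : pattern d l.+1) :
  is_parent B A -> is_parent B C -> (forall j, A ord_max j = C ord_max j) -> A = C.
Proof.
move=> BA BC top; apply: functional_extensionality_dep => k.
have [lt_kl|ge_kl] := ltnP k l.
  have -> : k = widen_ord (leqnSn l) (Ordinal lt_kl) by exact: val_inj.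
  by apply: funext => j; have := BA (Ordinal lt_kl) j; rewrite -(BC (Ordinal lt_kl) j).
by rewrite (ord_max_ge ge_kl); exact: funext.
Qed.

Definition flip l (A : pattern d l.+1) (j0 : 'I_(d l.+1)) : pattern d l.+1 :=
  fun k j => if ((k : nat) == l) && ((j : nat) == j0) then ~~ A k j else A k j.
Arguments flip {l} A j0 _ _.

Lemma flip_top l (A : pattern d l.+1) j0 (j : 'I_(d l.+1)) :
  flip A j0 ord_max j = if j == j0 then ~~ A ord_max j else A ord_max j.
Proof. by rewrite /flip /= eqxx. Qed.

Lemma flip_parent l (B : pattern d l) (A : pattern d l.+1) j0 :
  is_parent B A -> is_parent B (flip A j0).
Proof. by move=> BA k j; rewrite -BA /parent /flip /= ltn_eqF. Qed.

Lemma flip_neighbour l (A : pattern d l.+1) j0 : neighboring_siblings (flip A j0) A.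
Proof.
split=> [k j|]; first by rewrite /parent /flip /= ltn_eqF.
rewrite -(card1 j0); apply: eq_card => j; apply/idP/idP;
  by rewrite in_setE /= flip_top inE; case: (j == j0); case: (A ord_max j).
Qed.

Definition hamming l (A C : pattern d l.+1) : nat :=
  #|[pred j | A ord_max j != C ord_max j]|.

Lemma hamming_flip l (A C : pattern d l.+1) j :
  A ord_max j != C ord_max j -> hamming A C = (hamming (flip A j) C).+1.
Proof.
move=> AC_j; rewrite /hamming (cardD1 j) inE AC_j add1n; congr _.+1.
apply: eq_card => i; rewrite !inE flip_top.
by case: eqP => [->|] //=; move: AC_j; case: (A ord_max j); case: (C ord_max j).
Qed.

Definition with_top l (A : pattern d l.+1) (s : {ffun 'I_(d l.+1) -> bool}) :
  pattern d l.+1 :=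
  fun k j => if (k : nat) == l then oapp s false (insub (val j) : option 'I_(d l.+1))
             else A k j.
Arguments with_top {l} A s _ _.

Lemma with_top_parent l (A : pattern d l.+1) s : is_parent (parent A) (with_top A s).
Proof. by move=> k j; rewrite /parent /with_top /= ltn_eqF. Qed.

Lemma with_top_sibling l (A A' : pattern d l.+1) : is_parent (parent A) A' ->
  with_top A [ffun j => A' ord_max j] = A'.
Proof.
move=> AA'; apply: sibling_eq (with_top_parent _ _) AA' _ => j.
by rewrite /with_top /= eqxx valK /= ffunE.
Qed.

End Segments.

(** Along [t |-> t * a + (1 - t) * c], from [c <= 0] at t = 0 to [a >= 0] at
    t = 1, the sign changes at [t = cross_time a c]. *)
Definition cross_time (R : realType) (a c : R) : R := if a == c then 1 else c / (c - a).

Lemma cross_timeP (R : realType) (a c : R) : 0 <= a -> c <= 0 ->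
  let s := cross_time a c in [/\ 0 <= s, s <= 1 & s * a + (1 - s) * c = 0].
Proof.
move=> a0 c0; rewrite /cross_time; case: eqP => [ac|/eqP ac]; first by split; lra.
have ca : c - a < 0 by rewrite lt_neqAle subr_eq0 eq_sym ac /=; lra.
split.
- by rewrite ler_ndivlMr // mul0r.
- by rewrite ler_ndivrMr // mul1r; lra.
- by field; exact: ltr0_neq0.
Qed.

Lemma after_cross_time (R : realType) (a c t : R) : 0 <= a -> c <= 0 ->
  cross_time a c <= t -> 0 <= t * a + (1 - t) * c.
Proof. by move=> a0 c0 st; have [_ _] := cross_timeP a0 c0; nra. Qed.

Lemma convex_comb_le_max (R : realType) (t p q : R) :
  0 <= t <= 1 -> t * p + (1 - t) * q <= Num.max p q.
Proof.
move=> /andP[t0 t1]; have := le_max p p q; have := le_max q p q.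
by rewrite !lexx orbT /= => /idP hq /idP hp; nra.
Qed.

Lemma finite_selection (R : realType) (I : finType) (P : I -> R -> Prop) :
  (forall i e e', e <= e' -> P i e -> P i e') ->
  (forall e, 0 < e -> exists i, P i e) ->
  exists i, forall e, 0 < e -> P i e.
Proof.
move=> mono some; apply: contrapT => none.
have [i0 _] := some 1 ltr01.
have bad i : exists e, 0 < e /\ ~ P i e.
  have /existsNP[e /not_implyP[e0 notP]] : ~ forall e, 0 < e -> P i e.
    by move=> Pi; apply: none; exists i.
  by exists e.
have [f fP] := choice bad.
case: (@arg_minP _ _ _ i0 predT f isT) => i _ min_i.
have [j Pj] := some (f i) (fP i).1.
by apply: (fP j).2; exact: mono (min_i j isT) Pj.
Qed.

Section SearchGraph.
Variables (R : realType) (d : nat -> nat).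
Variables (W : forall i, 'M[R]_(d i.+1, d i)) (b : forall i, 'cV[R]_(d i.+1)).
Variables (L : nat) (delta : 'cV[R]_(d 0%N) -> R).
Hypothesis delta_ge0 : forall v, 0 <= delta v.
Hypothesis delta_convex : forall u v t, 0 <= t <= 1 ->
  delta (t *: u + (1 - t) *: v) <= t * delta u + (1 - t) * delta v.

Local Notation region := (region W b).
Local Notation dist := (dist delta).

(** On the segment from v to c the last-layer
    preactivations are affine; at the first crossing time of a hyperplane of a
    differing neuron j we are in R_(flip A j), not farther than v and c. *)
Lemma crossing l (B : pattern d l) (A C : pattern d l.+1) v c j1 :
  is_parent B A -> is_parent B C -> region A v -> region C c ->
  A ord_max j1 != C ord_max j1 ->
  exists2 j, A ord_max j != C ord_max j &
    exists2 w, region (flip A j) w & delta w <= Num.max (delta v) (delta c).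
Proof.
move=> BA BC /(region_child W b _ BA) [Bv Av] /(region_child W b _ BC) [Bc Cc] ACj1.
pose sv i := sgnb R (A ord_max i) * preact W b v l i ord0.
pose sc i := sgnb R (A ord_max i) * preact W b c l i ord0.
have sc_le0 i : A ord_max i != C ord_max i -> sc i <= 0.
  by have := Cc i; rewrite /sc /sgnb; case: (A _ _); case: (C _ _) => //= Cci _; lra.
have sc_ge0 i : A ord_max i = C ord_max i -> 0 <= sc i by rewrite /sc => ->.
pose time i := cross_time (sv i) (sc i).
case: (@arg_maxP _ _ _ j1 [pred i | A ord_max i != C ord_max i] time ACj1).
move=> j ACj latest_j; exists j => //.
have [t0 t1 root_j] := cross_timeP (Av j) (sc_le0 j ACj).
set t := cross_time _ _ in t0 t1 root_j; have t01 : 0 <= t <= 1 by rewrite t0 t1.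
exists (t *: v + (1 - t) *: c); last first.
  exact: le_trans (delta_convex v c t01) (convex_comb_le_max _ _ t01).
apply/(region_child W b _ (flip_parent j BA)); split; first exact: region_convex.
move=> i; rewrite (preact_segment Bv Bc t01 (leqnn l)) entry_segment flip_top.
case: eqP => [->|_]; first by rewrite sgnbN mulNr sgnb_segment oppr_ge0 root_j.
rewrite sgnb_segment; have [ACi|/negbNE/eqP ACi] := boolP (A ord_max i != C ord_max i).
  exact: after_cross_time (Av i) (sc_le0 i ACi) (latest_j i ACi).
exact: convex_comb_ge0 t01 (Av i) (sc_ge0 i ACi).
Qed.

(** Flipping a suitable differing neuron of A gives a nonempty sibling
    with dist at most dist(R_A).  dist being an infimum, the crossing lemma is
    applied to near-optimal points and a neuron is selected by finiteness. *)
Lemma closer_flip l (B : pattern d l) (A C : pattern d l.+1) j1 :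
  is_parent B A -> is_parent B C -> region A !=set0 -> region C !=set0 ->
  dist (region C) <= dist (region A) -> A ord_max j1 != C ord_max j1 ->
  exists j, [/\ A ord_max j != C ord_max j, region (flip A j) !=set0
              & dist (region (flip A j)) <= dist (region A)].
Proof.
move=> BA BC neA neC CA ACj1; set dA := dist (region A).
pose close j e := A ord_max j != C ord_max j /\
                  exists2 w, region (flip A j) w & delta w <= dA + e.
have [|e e0|j closej] := @finite_selection R _ close.
- by move=> j e e' ee' [ACj [w Fw dw]]; split=> //; exists w => //; lra.
- have [v Av dv] := dist_approx delta neA e0.
  have [c Cc dc] := dist_approx delta neC e0.
  have [j ACj [w Fw dw]] := crossing BA BC Av Cc ACj1.
  exists j; split=> //; exists w => //.
  by apply: le_trans dw _; rewrite ge_max dv /=; lra.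
- have ACj := (closej 1 ltr01).1.
  have [neF leF] := dist_le_approx (S := region (flip A j)) (m := dA) delta_ge0
                      (fun e e0 => (closej e e0).2).
  by exists j.
Qed.

Definition vtx l (A : pattern d l) : vertex d := existT _ l A.

Definition monotone_edge (u v : vertex d) : Prop :=
  G_edge W b L delta u v /\ dist (vregion W b u) <= dist (vregion W b v).

Inductive reach : vertex d -> vertex d -> Prop :=
  | reach_refl u : reach u u
  | reach_cons u v w : monotone_edge u v -> reach v w -> reach u w.

Lemma reach_trans u v w : reach u v -> reach v w -> reach u w.
Proof. by elim=> // u1 v1 w1 uv _ IH /IH; exact: reach_cons. Qed.

Lemma reach_path u w : reach u w -> exists p,
  [/\ G_path W b L delta (u :: p), dist_monotone W b delta (u :: p) & last u p = w].
Proof.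
elim=> [u1|u1 v1 w1 [uv le_uv] _ [p [Gp mono lastp]]]; first by exists [::].
by exists (v1 :: p).
Qed.

Lemma sibling_paths l (B : pattern d l) (C : pattern d l.+1) : (l < L)%N ->
  is_parent B C -> region C !=set0 ->
  (forall A', is_parent B A' -> region A' !=set0 ->
     dist (region C) <= dist (region A')) ->
  forall A, is_parent B A -> region A !=set0 -> reach (vtx C) (vtx A).
Proof.
move=> lL BC neC minC A; move: {2}(hamming A C) (erefl (hamming A C)) => n.
elim: n A => [|n IH] A hAC BA neA.
  suff -> : A = C by exact: reach_refl.
  apply: sibling_eq BA BC _ => j; apply/eqP.
  by have := card0_eq hAC j; rewrite !inE => /negbFE.
have [j1] : exists j1, j1 \in [pred j | A ord_max j != C ord_max j].
  by apply/card_gt0P; rewrite -/(hamming A C) hAC.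
rewrite inE => ACj1.
have [j [ACj neF leF]] := closer_flip BA BC neA neC (minC A BA neA) ACj1.
have hFC : hamming (flip A j) C = n by have := hamming_flip ACj; rewrite hAC => -[].
apply: reach_trans (IH _ hFC (flip_parent j BA) neF) (reach_cons _ (reach_refl _)).
split=> //; split; [by split | by split | exact: gedge_sib (flip_neighbour A j)].
Qed.

Lemma region_parent l (B : pattern d l) (A : pattern d l.+1) :
  is_parent B A -> region A `<=` region B.
Proof. by move=> BA v /(region_child W b _ BA) []. Qed.

Lemma min_child l (A : pattern d l.+1) : region A !=set0 ->
  exists C, [/\ is_parent (parent A) C, region C !=set0 &
    forall A', is_parent (parent A) A' -> region A' !=set0 ->
      dist (region C) <= dist (region A')].
Proof.
move=> neA; have AA : is_parent (parent A) A by [].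
pose nonempty s := `[< region (with_top A s) !=set0 >].
have ne0 : nonempty [ffun j => A ord_max j].
  by apply/asboolP; rewrite (with_top_sibling AA).
case: (@arg_minP _ _ _ _ nonempty (fun s => dist (region (with_top A s))) ne0).
move=> s /asboolP neC min_s; exists (with_top A s); split=> // [|A' AA' neA'].
  exact: with_top_parent.
by rewrite -(with_top_sibling AA'); apply: min_s; apply/asboolP; rewrite with_top_sibling.
Qed.

Lemma first_pattern_region x : region (first_pattern W b x) x.
Proof.
move=> k j; rewrite /first_pattern /sgnb; case: ifP => [pos|/negbT].
  by rewrite mul1r.
by rewrite -ltNge mulN1r oppr_ge0 => /ltW.
Qed.

(** Induction on the depth: every nonempty pattern of depth l+1 <= L is reached
    from the first-layer pattern of x, using a down edge to a least-dist child
    of its parent followed by a sibling path. *)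
Lemma reach_patterns x : delta x = 0 -> forall l, (l < L)%N ->
  forall A : pattern d l.+1, region A !=set0 -> reach (vtx (first_pattern W b x)) (vtx A).
Proof.
move=> dx0; elim=> [|l IH] lL A neA.
  have first0 : is_parent (parent A) (first_pattern W b x) by case.
  have neF : region (first_pattern W b x) !=set0.
    by exists x; exact: first_pattern_region.
  have minF (A' : pattern d 1) : region A' !=set0 ->
      dist (region (first_pattern W b x)) <= dist (region A').
    move=> neA'; apply: le_trans (dist_ge0 delta_ge0 neA').
    by rewrite -dx0; exact/dist_le/first_pattern_region.
  exact (sibling_paths lL first0 neF (fun A' _ => minF A') (fun _ _ => erefl) neA).
have [C [PC neC minC]] := min_child neA.
have neP : region (parent A) !=set0.
  by case: neC => v Cv; exists v; exact: region_parent PC _ Cv.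
have down : monotone_edge (vtx (parent A)) (vtx C).
  split; last exact (dist_sub delta_ge0 (region_parent PC) neC).
  by split; [split=> //; exact: ltnW | split | exact: gedge_down PC minC].
exact (reach_trans (IH (ltnW lL) _ neP)
  (reach_cons down (sibling_paths lL PC neC minC (fun _ _ => erefl) neA))).
Qed.

End SearchGraph.

Theorem mainTheorem5 (R : realType) (d : nat -> nat)
  (W : forall i, 'M[R]_(d i.+1, d i)) (b : forall i, 'cV[R]_(d i.+1))
  (L : nat) (x : 'cV[R]_(d 0%N)) (delta : 'cV[R]_(d 0%N) -> R) :
  convex_distance_function x delta ->
  forall (l : nat) (A : pattern d l),
    (1 <= l <= L)%N ->
    region W b A !=set0 ->
    exists p : seq (vertex d),
      [/\ head (existT _ 1%N (first_pattern W b x)) p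
            = existT _ 1%N (first_pattern W b x),
          last (existT _ 1%N (first_pattern W b x)) p = existT _ l A,
          G_path W b L delta p
        & dist_monotone W b delta p].
Proof.
move=> [delta_convex _ _ delta_ge0 dx0] [|l] A /andP[_ lL] neA //.
have := reach_patterns delta_ge0 delta_convex dx0 lL neA.
move=> /reach_path[p [Gp mono lastp]].
by exists (vtx (first_pattern W b x) :: p).
Qed.
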